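(* There is an absolute constant $C>0$ such that the following holds. Let $(G,s,t)$ be an oriented serial superedge on $n$ vertices with principal subgraphs $(G_1,s_1,t_1),\dots,(G_k,s_k,t_k)$, each $G_i$ non-serial and having $n_i$ vertices. Then $$\sum_{i=1}^k n_i\,\big|\mathsf{ST}(G_i)/\mathrm{Aut}_{\mathrm{or}}(G_i,s_i,t_i)\big|\le C\,n\,\big|\mathsf{ST}(G)/\mathrm{Aut}_{\mathrm{or}}(G,s,t)\big|,$$ i.e. the left side is $O\big(n\,|\mathsf{ST}(G)/\mathrm{Aut}_{\mathrm{or}}(G,s,t)|\big)$.
   Context: All graphs are finite, simple and undirected. An oriented series-parallel graph is a triple $(G,s,t)$ where $G$ is a graph and $s\neq t$ are vertices, defined recursively: (i) $G$ is a single edge with vertex set $\{s,t\}$; or (ii) (serial superedge) there are $k\ge 2$ oriented series-parallel graphs $(G_1,s_1,t_1),\dots,(G_k,s_k,t_k)$ with $s_1=s$, $t_k=t$, $t_i=s_{i+1}$ for $1\le i<k$, $V(G_i)\cap V(G_{i+1})=\{s_{i+1}\}$, $V(G_i)\cap V(G_j)=\emptyset$ for $|i-j|\ge2$, and $G=G_1\cup\dots\cup G_k$; or (iii) (parallel superedge) there are $k\ge2$ oriented series-parallel graphs $(G_1,s,t),\dots,(G_k,s,t)$ with $V(G_i)\cap V(G_j)=\{s,t\}$ for $i\neq j$ and $G=G_1\cup\dots\cup G_k$. The $G_i$ are the principal subgraphs; a graph is non-serial if it is not a serial superedge. $\mathrm{Aut}_{\mathrm{or}}(H,u,v)$ is the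 group of automorphisms of $H$ fixing $u$ and $v$; $\mathsf{ST}(H)$ is the set of spanning trees of $H$, and $\mathsf{ST}(H)/\Gamma$ the set of orbits of spanning trees under the group $\Gamma$ (trees $A,B$ in the same orbit iff $A=\sigma(B)$ for some $\sigma\in\Gamma$). *)

From mathcomp Require Import all_boot all_fingroup.
Set Implicit Arguments. Unset Strict Implicit. Unset Printing Implicit Defensive.

Section SP.
Variable T : finType.

(* A (finite simple) graph on a subset of the ambient finite type T is a pair
   (V, E) with V : {set T} the vertex set and E : {set {set T}} the edge set,
   every edge being a 2-element subset of V. *)

(* Structural conditions of a serial superedge (G,s,t) = G_0 ... G_{k-1}
   (0-indexed; principal subgraphs given by Vs i, Es i, ss i, ts i, i < k). *)
Definition serial_shape (V : {set T}) (E : {set {set T}}) (s t : T)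
  (k : nat) (Vs : nat -> {set T}) (Es : nat -> {set {set T}})
  (ss ts : nat -> T) : Prop :=
  [/\ 2 <= k, ss 0 = s, ts k.-1 = t
    & (forall i, i.+1 < k -> ts i = ss i.+1)] /\
  [/\ (forall i, i.+1 < k -> Vs i :&: Vs i.+1 = [set ss i.+1]),
      (forall i j, i < k -> j < k -> i.+2 <= j -> Vs i :&: Vs j = set0),
      V = \bigcup_(i < k) Vs i
    & E = \bigcup_(i < k) Es i].

Definition parallel_shape (V : {set T}) (E : {set {set T}}) (s t : T)
  (k : nat) (Vs : nat -> {set T}) (Es : nat -> {set {set T}}) : Prop :=
  [/\ 2 <= k,
      (forall i j, i < k -> j < k -> i != j -> Vs i :&: Vs j = [set s; t]),
      V = \bigcup_(i < k) Vs i
    & E = \bigcup_(i < k) Es i].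

Inductive osp : {set T} -> {set {set T}} -> T -> T -> Prop :=
| osp_edge s t : s != t -> osp [set s; t] [set [set s; t]] s t
| osp_serial V E s t k Vs Es ss ts :
    serial_shape V E s t k Vs Es ss ts ->
    (forall i, i < k -> osp (Vs i) (Es i) (ss i) (ts i)) ->
    osp V E s t
| osp_parallel V E s t k Vs Es :
    parallel_shape V E s t k Vs Es ->
    (forall i, i < k -> osp (Vs i) (Es i) s t) ->
    osp V E s t.

Definition is_serial (V : {set T}) (E : {set {set T}}) (s t : T) : Prop :=
  exists k Vs Es ss ts, serial_shape V E s t k Vs Es ss ts /\
    (forall i, i < k -> osp (Vs i) (Es i) (ss i) (ts i)).

Definition adj (F : {set {set T}}) : rel T := fun x y => [set x; y] \in F.

Definition connectedb (V : {set T}) (F : {set {set T}}) : bool :=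
  [forall x, forall y, (x \in V) ==> (y \in V) ==> connect (adj F) x y].

(* Since the vertices are
   distinct, m <= #|T|, so it suffices to range over tuples of size <= #|T|. *)
Definition has_cycle (F : {set {set T}}) : bool :=
  [exists m : 'I_(#|T|).+1, exists c : m.-tuple T,
     [&& 2 < m, path.cycle (adj F) c & uniq c]].

Definition ST (V : {set T}) (E : {set {set T}}) : {set {set {set T}}} :=
  [set F : {set {set T}} | [&& F \subset E, connectedb V F & ~~ has_cycle F]].

(* Aut_or(H, u, v) for H = (V, E), realised as the permutations of T that are
   the identity outside V, preserve V and adjacency, and fix u and v. *)
Definition Aut_or (V : {set T}) (E : {set {set T}}) (u v : T) : {set {perm T}} :=
  [set sigma : {perm T} |
    [&& [forall x, (x \notin V) ==> (sigma x == x)],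
        [forall x, (x \in V) ==> (sigma x \in V)],
        [forall x, forall y, ([set x; y] \in E) == ([set sigma x; sigma y] \in E)],
        sigma u == u & sigma v == v]].

Definition act_edges (sigma : {perm T}) (F : {set {set T}}) : {set {set T}} :=
  [set sigma @: f | f : {set T} in F].

Definition orbit_of (A : {set {perm T}}) (F : {set {set T}}) :=
  [set act_edges sigma F | sigma : {perm T} in A].

Definition n_orbits (V : {set T}) (E : {set {set T}}) (u v : T) : nat :=
  #|[set orbit_of (Aut_or V E u v) F | F : {set {set T}} in ST V E]|.

End SP.

From mathcomp Require Import all_boot all_fingroup zify.
Set Implicit Arguments. Unset Strict Implicit. Unset Printing Implicit Defensive.

(* Every automorphism in Aut_or(G,s,t) fixes the cut vertices s = c_0, ..., c_k = t
   between consecutive principal subgraphs.  Indeed, since no G_i is serial, these are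
   exactly the vertices separating s from t, and c_j is the unique one preceded (as seen
   from s) by exactly j separating vertices, a number that automorphisms preserve.  Hence
   an automorphism stabilises each G_i and restricts to an element of
   Aut_or(G_i, c_i, c_(i+1)).  Completing a spanning tree of G_i by fixed spanning trees of
   the other G_j gives a spanning tree of G, and completions lying in the same
   Aut_or(G)-orbit come from trees in the same Aut_or(G_i)-orbit; thus
   |ST(G_i)/Aut_or| <= |ST(G)/Aut_or|.  Finally consecutive G_i share one vertex and each
   has at least two, so sum_i n_i <= 2n, and C = 2 works. *)

Lemma leq_card_imset_factor (aT rT rT' : finType) (f : aT -> rT) (g : aT -> rT')
    (A : {set aT}) :
  {in A &, forall x y, f x = f y -> g x = g y} -> #|g @: A| <= #|f @: A|.
Proof.
move=> fg; pose P := [set (f x, g x) | x in A].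
have -> : g @: A = snd @: P by rewrite /P -imset_comp.
have -> : f @: A = fst @: P by rewrite /P -imset_comp.
rewrite (card_in_imset (f := fst)); first exact: leq_imset_card.
by move=> _ _ /imsetP[x xA ->] /imsetP[y yA ->] /= fxy; rewrite fxy (fg x y).
Qed.

Lemma imset_set2 (aT rT : finType) (f : aT -> rT) x y : f @: [set x; y] = [set f x; f y].
Proof. by rewrite imsetU1 imset_set1. Qed.

Lemma sum_card_bigcup (T : finType) (A : nat -> {set T}) m :
  (forall i, i < m -> #|(\bigcup_(j < i) A j) :&: A i| <= 1) ->
  \sum_(i < m) (#|A i|).-1 <= #|\bigcup_(i < m) A i|.
Proof.
elim: m => [|m IHm] meet1; first by rewrite big_ord0.
rewrite !big_ord_recr /=; set U := \bigcup_(i < m) A i.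
have := cardsUI U (A m); have := subset_leq_card (subsetIr U (A m)).
have := IHm (fun i im => meet1 i (ltnW im)); have := meet1 m (ltnSn m).
move: #|U :&: A m| #|U :|: A m| #|U| #|A m| (\sum_(i < m) _) => c u n a S; lia.
Qed.

Lemma path_all_closed (T : eqType) (e : rel T) (P : pred T) x p :
  (forall u w, e u w -> P u -> P w) -> path e x p -> P x -> all P (x :: p).
Proof.
move=> eP; elim: p x => [|y p IHp] x /=; first by move=> _ ->.
by case/andP=> exy pp Px; rewrite Px; exact: IHp pp (eP _ _ exy Px).
Qed.

Lemma connect_chain (T : finType) (e : rel T) (c : nat -> T) a b : a <= b ->
  (forall m, a <= m < b -> connect e (c m) (c m.+1)) -> connect e (c a) (c b).
Proof.
elim: b => [|b IHb]; first by rewrite leqn0 => /eqP->.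
rewrite leq_eqVlt ltnS => /predU1P[-> _ //|ab] step.
apply: connect_trans (IHb ab _) (step b _) => [m /andP[am mb]|].
  by rewrite step // am ltnW.
by rewrite ab ltnSn.
Qed.

Section Graphs.
Variable T : finType.
Implicit Types (A B : {set T}) (E F : {set {set T}}) (x y u v w : T).

Definition edges_on E A :=
  forall e, e \in E -> exists x y, [/\ x != y, x \in A, y \in A & e = [set x; y]].

Definition avoid E v := [set e in E | v \notin e].

Lemma adj_sym F : symmetric (adj F).
Proof. by move=> x y; rewrite /adj setUC. Qed.

Lemma connect_adj_sym F : connect_sym (adj F).
Proof. exact/sym_connect_sym/adj_sym. Qed.

Lemma connect_adj_sub E F : F \subset E -> subrel (connect (adj F)) (connect (adj E)).
Proof. by move=> sFE; apply: connect_sub => x y xy; apply/connect1/(subsetP sFE). Qed.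

Lemma edges_onS E F A : F \subset E -> edges_on E A -> edges_on F A.
Proof. by move=> sFE onE e /(subsetP sFE)/onE. Qed.

Lemma edges_on_subset E A e : edges_on E A -> e \in E -> e \subset A.
Proof.
by move=> onE /onE[x [y [_ xA yA ->]]]; apply/subsetP => z /set2P[]->.
Qed.

Lemma edges_on_mem E A x y : edges_on E A -> [set x; y] \in E -> (x \in A) && (y \in A).
Proof.
by move=> onE /(edges_on_subset onE)/subsetP sA; rewrite !sA ?set21 ?set22.
Qed.

Lemma edges_on_neq E A x y : edges_on E A -> [set x; y] \in E -> x != y.
Proof.
move=> onE /onE[a [b [ab _ _ eab]]]; apply: contra_neq ab => exy.
by move: (set21 a b) (set22 a b); rewrite -eab exy setUid !inE => /eqP-> /eqP->.
Qed.

Lemma edges_on_bigcup (I : finType) (P : pred I) (Fs : I -> {set {set T}}) (As : I -> {set T}) :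
  (forall i, P i -> edges_on (Fs i) (As i)) ->
  edges_on (\bigcup_(i | P i) Fs i) (\bigcup_(i | P i) As i).
Proof.
move=> onF e /bigcupP[i Pi /(onF i Pi)[x [y [xy xi yi ->]]]].
by exists x, y; split=> //; apply/bigcupP; exists i.
Qed.

Lemma adj_avoid E v x y : adj (avoid E v) x y = adj E x y && (v \notin [set x; y]).
Proof. by rewrite /adj inE. Qed.

Lemma avoidS E F v : F \subset E -> avoid F v \subset avoid E v.
Proof. by move=> sFE; apply/subsetP => e; rewrite !inE => /andP[/(subsetP sFE)-> ->]. Qed.

Lemma sub_avoid E F A v : F \subset E -> edges_on F A -> v \notin A -> F \subset avoid E v.
Proof.
move=> sFE onF vA; apply/subsetP => e eF; rewrite inE (subsetP sFE) //=.
by apply: contra vA => /(subsetP (edges_on_subset onF eF)).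
Qed.

Lemma connect_avoid_to E v x : connect (adj (avoid E v)) x v -> x = v.
Proof.
case/connectP=> p; case/lastP: p => [_ -> //|p z].
rewrite rcons_path last_rcons adj_avoid => /and3P[_ _ /negP vNe] vz.
by case: vNe; rewrite vz set22.
Qed.

Lemma connect_avoid_perm E (g : {perm T}) v x y :
  {mono g : a b / [set a; b] \in E} ->
  connect (adj (avoid E v)) x y -> connect (adj (avoid E (g v))) (g x) (g y).
Proof.
move=> gE /connectP[p pth ->]; apply/connectP; exists (map g p); last by rewrite last_map.
by move: pth; apply: homo_path => a b; rewrite !adj_avoid /adj gE !inE !(inj_eq perm_inj).
Qed.

Lemma connectedbP A F :
  reflect {in A &, forall x y, connect (adj F) x y} (connectedb A F).
Proof.
apply: (iffP forallP) => [cF x y xA yA | cF x].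
  by move/forallP: (cF x) => /(_ y); rewrite xA yA.
by apply/forallP => y; apply/implyP => xA; apply/implyP; apply: cF.
Qed.

Lemma connectedb_from A F s : {in A, forall x, connect (adj F) s x} -> connectedb A F.
Proof.
move=> sF; apply/connectedbP => x y xA yA.
by apply: (@connect_trans _ _ s); [rewrite connect_adj_sym|]; apply: sF.
Qed.

Definition two_terminal A E s t :=
  [/\ s != t, [set s; t] \subset A, edges_on E A,
      {in A, forall x, connect (adj E) s x}
    & {in A, forall x, x != t -> connect (adj (avoid E t)) s x}].

Lemma two_terminal_connected A E s t : two_terminal A E s t -> connectedb A E.
Proof. by case=> _ _ _ reach _; apply: connectedb_from reach. Qed.

Lemma has_cycleP F :
  reflect (exists2 c : seq T, 2 < size c & path.cycle (adj F) c && uniq c) (has_cycle F).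
Proof.
apply: (iffP existsP) => [[m /existsP[c /and3P[m2 cyc uc]]] | [c c2 /andP[cyc uc]]].
  by exists c; rewrite ?size_tuple // cyc uc.
have cT : size c < #|T|.+1 by rewrite ltnS -(card_uniqP uc) max_card.
by exists (Ordinal cT); apply/existsP; exists (in_tuple c); rewrite /= c2 cyc uc.
Qed.

Lemma has_cycle0 : ~~ has_cycle (set0 : {set {set T}}).
Proof.
by apply/has_cycleP => -[[|x [|y c]] //= _]; rewrite /adj inE.
Qed.

Lemma adj_setD1 F (e : {set T}) x y :
  adj F x y -> (x \notin e) || (y \notin e) -> adj (F :\ e) x y.
Proof.
rewrite /adj in_setD1 => -> xyNe; rewrite andbT.
by apply: contraTneq xyNe => <-; rewrite set21 set22.
Qed.

Lemma connect_cycle_setD1 F x0 x1 x2 q :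
  path.cycle (adj F) [:: x0, x1, x2 & q] -> uniq [:: x0, x1, x2 & q] ->
  connect (adj (F :\ [set x0; x1])) x0 x1.
Proof.
rewrite connect_adj_sym.
set e := [set x0; x1]; move=> cyc; rewrite cons_uniq => /andP[x0N /andP[x1N _]].
move: cyc; rewrite /= rcons_path => /and4P[_ x12 pq qx0].
have Ne w : w \in x2 :: q -> w \notin e.
  move=> wq; rewrite !inE negb_or (memPn x1N) // andbT.
  by apply: (memPn x0N); rewrite in_cons wq orbT.
apply: (@connect_trans _ _ x2).
  by apply/connect1/(adj_setD1 x12); rewrite (Ne x2) ?orbT ?mem_head.
apply: (@connect_trans _ _ (last x2 q)).
  apply/path_connect/mem_last; apply: (@sub_in_path _ [pred w | w \notin e]) pq.
    by move=> u w uNe _ /adj_setD1; apply; rewrite inE in uNe; rewrite uNe.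
  by apply/allP => w /Ne.
by apply/connect1/(adj_setD1 qx0); rewrite Ne ?mem_last.
Qed.

Lemma connectedb_setD1 A F x y :
  connectedb A F -> connect (adj (F :\ [set x; y])) x y -> connectedb A (F :\ [set x; y]).
Proof.
move=> /connectedbP cF xy; apply/connectedbP => u w uA wA.
apply: connect_sub (cF u w uA wA) => a b ab.
have [eab|neab] := eqVneq [set a; b] [set x; y]; last first.
  by apply: connect1; rewrite /adj in_setD1 neab.
move: (set21 a b) (set22 a b); rewrite eab => /set2P[]-> /set2P[]->;
  by rewrite ?connect0 // connect_adj_sym.
Qed.

Lemma ST_exists A E : connectedb A E -> exists F, F \in ST A E.
Proof.
move=> cE; pose P := [pred F : {set {set T}} | (F \subset E) && connectedb A F].
have PE : P E by rewrite /= subxx.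
case: (arg_minnP (fun F => #|F|) PE) => F /andP[sFE cF] minF.
exists F; rewrite inE sFE cF /=.
apply/has_cycleP => -[[|x0 [|x1 [|x2 q]]] //= _ /andP[cyc uc]].
have cF' := connectedb_setD1 cF (connect_cycle_setD1 cyc uc).
have /minF : (F :\ [set x0; x1] \subset E) && connectedb A (F :\ [set x0; x1]).
  by rewrite cF' andbT (subset_trans (subD1set _ _)).
by rewrite (cardsD1 [set x0; x1] F) (_ : _ \in F) ?ltnn //; case/andP: cyc.
Qed.

Lemma adj_setU_mem A B FA FB c x y :
  {in A, forall z, z \in B -> z = c} -> edges_on FA A -> edges_on FB B ->
  adj (FA :|: FB) x y -> x != c -> x \in A -> y \in A.
Proof.
move=> AB onA onB; rewrite /adj inE => /orP[/(edges_on_mem onA)/andP[_ ->] //|].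
by move=> /(edges_on_mem onB)/andP[xB _] xNc xA; rewrite (AB x xA xB) eqxx in xNc.
Qed.

Lemma cycle_setUl A B FA FB c cs :
  {in A, forall z, z \in B -> z = c} -> edges_on FB B -> all [in A] cs ->
  path.cycle (adj (FA :|: FB)) cs -> path.cycle (adj FA) cs.
Proof.
move=> AB onB csA; apply: (sub_in_cycle _ csA) => x y xA yA.
rewrite /adj inE => /orP[// | xyB]; have /andP[xB yB] := edges_on_mem onB xyB.
by have := edges_on_neq onB xyB; rewrite (AB x xA xB) (AB y yA yB) eqxx.
Qed.

(* Along a path avoiding [c], no step can leave [A], as [A] and [B] only meet in [c]. *)
Lemma cycle_setU_side A B FA FB c h y q :
  {in A, forall z, z \in B -> z = c} -> edges_on FA A -> edges_on FB B ->
  path.cycle (adj (FA :|: FB)) [:: h, y & q] -> c \notin y :: q -> y \in A ->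
  path.cycle (adj FA) [:: h, y & q].
Proof.
move=> AB onA onB cyc cNq yA.
have /andP[hy pq] : adj (FA :|: FB) h y && path (adj (FA :|: FB)) y q.
  by move: (cyc); rewrite /= rcons_path => /and3P[-> ->].
have qNc : all [pred z | z != c] (y :: q).
  by apply/allP => z zq; apply: contraNneq cNq => <-.
have yqA : all [in A] (y :: q).
  apply: (@path_all_closed _ [rel x z | adj (FA :|: FB) x z && (x != c)]) yA.
    by move=> x z /andP[xz xNc]; apply: adj_setU_mem AB onA onB xz xNc.
  by apply: (sub_in_path _ qNc pq) => x z /= xNc _ xz; rewrite xz.
have hA : h \in A.
  by apply: (adj_setU_mem AB onA onB _ _ yA); [rewrite adj_sym | case/andP: qNc].
by apply: (cycle_setUl AB onB _ cyc); rewrite /= hA.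
Qed.

Lemma acyclic_setU A B FA FB c :
  {in A, forall z, z \in B -> z = c} -> edges_on FA A -> edges_on FB B ->
  ~~ has_cycle FA -> ~~ has_cycle FB -> ~~ has_cycle (FA :|: FB).
Proof.
move=> AB onA onB FAN FBN; apply/has_cycleP => -[cs cs2 /andP[cyc uc]].
pose h := if c \in cs then c else head c cs.
have [i q rot_cs] : rot_to_spec cs h.
  apply: rot_to; rewrite /h; case: ifP => // _.
  by rewrite -nth0 mem_nth // (ltnW (ltnW cs2)).
have {cyc uc cs2} [q2 cyc uc] :
    [/\ 2 < size (h :: q), path.cycle (adj (FA :|: FB)) (h :: q) & uniq (h :: q)].
  by rewrite -rot_cs size_rot rot_cycle rot_uniq.
have cNq : c \notin q.
  apply/negP => cq; have ccs : c \in cs by rewrite -(mem_rot i) rot_cs in_cons cq orbT.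
  by move: uc; rewrite /h ccs cons_uniq cq.
clear rot_cs; case: q q2 cyc uc cNq => [//|y q] q2 cyc uc cNq.
have /orP[yA|yB] : (y \in A) || (y \in B).
  case/andP: cyc; rewrite /adj inE.
  by case/orP=> [/(edges_on_mem onA)|/(edges_on_mem onB)] /andP[_ ->]; rewrite ?orbT.
- move/has_cycleP: FAN; apply; exists [:: h, y & q] => //.
  by rewrite (cycle_setU_side AB onA onB cyc cNq yA).
- have BA : {in B, forall z, z \in A -> z = c} by move=> z zB zA; apply: AB.
  rewrite setUC in cyc; move/has_cycleP: FBN; apply; exists [:: h, y & q] => //.
  by rewrite (cycle_setU_side BA onB onA cyc cNq yB).
Qed.

Definition before E s v := [set x | (x != v) && connect (adj (avoid E v)) s x].

Definition separates E s t v := ~~ connect (adj (avoid E v)) s t.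

Definition sep_rank A E s t v := #|[set c in A | separates E s t c && (c \in before E s v)]|.

Section Automorphisms.
Variables (V : {set T}) (E : {set {set T}}) (s t : T).
Implicit Type g : {perm T}.

Lemma aut_out g x : g \in Aut_or V E s t -> x \notin V -> g x = x.
Proof. by rewrite inE => /and5P[/forallP/(_ x)/implyP h _ _ _ _] /h/eqP. Qed.

Lemma aut_mem g : g \in Aut_or V E s t -> {mono g : x / x \in V}.
Proof.
move=> gA x; have [xV|xNV] := boolP (x \in V); last by rewrite aut_out // (negbTE xNV).
by move: gA; rewrite inE => /and5P[_ /forallP/(_ x)/implyP/(_ xV) -> _ _ _].
Qed.

Lemma aut_edge g : g \in Aut_or V E s t -> {mono g : x y / [set x; y] \in E}.
Proof. by rewrite inE => /and5P[_ _ /forallP h _ _] x y; move/forallP/(_ y)/eqP: (h x). Qed.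

Lemma aut_fixl g : g \in Aut_or V E s t -> g s = s.
Proof. by rewrite inE => /and5P[_ _ _ /eqP-> _]. Qed.

Lemma aut_fixr g : g \in Aut_or V E s t -> g t = t.
Proof. by rewrite inE => /and5P[_ _ _ _ /eqP->]. Qed.

Lemma group_set_Aut_or : group_set (Aut_or V E s t).
Proof.
apply/group_setP; split=> [|g h gA hA].
  rewrite inE !perm1 !eqxx !andbT; apply/and3P; split; apply/forallP => x;
    rewrite ?perm1 ?eqxx ?implybT ?implybb //.
  by apply/forallP => y; rewrite !perm1 eqxx.
rewrite inE !permM (aut_fixl gA) (aut_fixl hA) (aut_fixr gA) (aut_fixr hA) !eqxx !andbT.
apply/and3P; split; apply/forallP => x.
- by apply/implyP => xNV; rewrite permM (aut_out gA) ?(aut_out hA).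
- by rewrite permM (aut_mem hA) (aut_mem gA) implybb.
- by apply/forallP => y; rewrite !permM (aut_edge hA) (aut_edge gA) eqxx.
Qed.

Canonical Aut_or_group := group group_set_Aut_or.

Lemma aut_connect_avoid g w x y : g \in Aut_or V E s t ->
  connect (adj (avoid E (g w))) (g x) (g y) = connect (adj (avoid E w)) x y.
Proof.
move=> gA; apply/idP/idP; last exact: connect_avoid_perm (aut_edge gA).
have gA' : (g^-1)%g \in Aut_or V E s t by rewrite groupV.
by move/(connect_avoid_perm (aut_edge gA')); rewrite !permK.
Qed.

Lemma aut_before g w x : g \in Aut_or V E s t ->
  (g x \in before E s (g w)) = (x \in before E s w).
Proof. by move=> gA; rewrite !inE (inj_eq perm_inj) -{1}(aut_fixl gA) aut_connect_avoid. Qed.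

Lemma aut_separates g w : g \in Aut_or V E s t ->
  separates E s t (g w) = separates E s t w.
Proof.
by move=> gA; rewrite /separates -{1}(aut_fixl gA) -{1}(aut_fixr gA) aut_connect_avoid.
Qed.

Lemma aut_sep_rank g w : g \in Aut_or V E s t ->
  sep_rank V E s t (g w) = sep_rank V E s t w.
Proof.
move=> gA; rewrite /sep_rank -[RHS](card_imset _ (@perm_inj _ g)); apply: eq_card => x.
rewrite -[x](permKV g) (mem_imset _ _ perm_inj) in_set [in RHS]in_set.
by rewrite (aut_mem gA) (aut_separates _ gA) (aut_before _ _ gA).
Qed.

End Automorphisms.

(* [act_edges] is the natural action ['P] lifted twice to sets, which gives access to
   the orbit theory of [action]. *)
Definition edge_action : action [set: {perm T}] {set {set T}} := (('P^*)^*)%act.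

Lemma act_edgesE (g : {perm T}) F : act_edges g F = edge_action F g.
Proof. by []. Qed.

Lemma orbit_ofE (G : {set {perm T}}) F : orbit_of G F = orbit edge_action G F.
Proof. by []. Qed.

End Graphs.

Arguments edge_action {T}.

Section Serial.
Variables (T : finType) (V : {set T}) (E : {set {set T}}) (s t : T) (k : nat)
  (Vs : nat -> {set T}) (Es : nat -> {set {set T}}) (ss ts : nat -> T).
Implicit Types (F : {set {set T}}) (v x : T).
Hypothesis shape : serial_shape V E s t k Vs Es ss ts.
Hypothesis Gi : forall i, i < k -> two_terminal (Vs i) (Es i) (ss i) (ts i).

Definition cut j := if j < k then ss j else t.

Lemma k_gt1 : 1 < k.
Proof. by case: shape => -[]. Qed.

Lemma k_gt0 : 0 < k.
Proof. exact: ltn_trans k_gt1. Qed.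

Lemma cut0 : cut 0 = s.
Proof. by rewrite /cut k_gt0; case: shape => -[]. Qed.

Lemma cutk : cut k = t.
Proof. by rewrite /cut ltnn. Qed.

Lemma ss_cut i : i < k -> ss i = cut i.
Proof. by rewrite /cut => ->. Qed.

Lemma ts_cut i : i < k -> ts i = cut i.+1.
Proof.
case: shape => -[_ _ tk tss] _ ik; rewrite /cut; case: ltnP => ik1; first exact: tss.
by have -> : i = k.-1 by lia.
Qed.

Lemma mem_Vs_V i x : i < k -> x \in Vs i -> x \in V.
Proof. by case: shape => _ [_ _ -> _] ik xi; apply/bigcupP; exists (Ordinal ik). Qed.

Lemma Es_sub_E i : i < k -> Es i \subset E.
Proof. by case: shape => _ [_ _ _ ->] ik; apply: (bigcup_sup (Ordinal ik)). Qed.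

Lemma mem_V x : x \in V -> exists2 i, i < k & x \in Vs i.
Proof. by case: shape => _ [_ _ -> _] /bigcupP[[i ik] _ xi]; exists i. Qed.

Lemma mem_E e : e \in E -> exists2 i, i < k & e \in Es i.
Proof. by case: shape => _ [_ _ _ ->] /bigcupP[[i ik] _ ei]; exists i. Qed.

Lemma two_terminal_cut i : i < k -> two_terminal (Vs i) (Es i) (cut i) (cut i.+1).
Proof. by move=> ik; rewrite -ss_cut -?ts_cut //; apply: Gi. Qed.

Lemma cut_neq i : i < k -> cut i != cut i.+1.
Proof. by case/two_terminal_cut. Qed.

Lemma cutl_Vs i : i < k -> cut i \in Vs i.
Proof. by case/two_terminal_cut => _ /subsetP-> //; rewrite set21. Qed.

Lemma cutr_Vs i : i < k -> cut i.+1 \in Vs i.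
Proof. by case/two_terminal_cut => _ /subsetP-> //; rewrite set22. Qed.

Lemma Es_on i : i < k -> edges_on (Es i) (Vs i).
Proof. by case/two_terminal_cut. Qed.

Lemma Vs_meet i j x : i < j -> j < k -> x \in Vs i -> x \in Vs j -> j = i.+1 /\ x = cut j.
Proof.
case: shape => _ [adjV farV _ _] ij jk xi xj.
case: (ltngtP j i.+1) => [|i1j|ji1]; first by rewrite ltnS leqNgt ij.
  by move/setP/(_ x): (farV i j (ltn_trans ij jk) jk i1j); rewrite !inE xi xj.
subst j; split=> //; rewrite -ss_cut //.
by move/setP/(_ x): (adjV i jk); rewrite !inE xi xj => /esym/eqP.
Qed.

Lemma cut_home j : j <= k -> exists2 i, i < k & (cut j \in Vs i) && ((i == j) || (i.+1 == j)).
Proof.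
case: (ltngtP j k) => // [jk _|-> _]; first by exists j; rewrite ?cutl_Vs ?eqxx.
have [p kp] : exists p, k = p.+1 by exists k.-1; rewrite prednK // k_gt0.
by exists p; rewrite {1}kp ?cutr_Vs ?kp ?eqxx ?orbT.
Qed.

Lemma cut_Vs l m : l < k -> m <= k -> (cut m \in Vs l) = (l == m) || (l.+1 == m).
Proof.
move=> lk mk; apply/idP/idP => [cml|/orP[]/eqP<-]; [|exact: cutl_Vs|exact: cutr_Vs].
have [h hk /andP[cmh hm]] := cut_home mk.
case: (ltngtP l h) => [lh|hl|-> //].
- have [hl1 cmh'] := Vs_meet lh hk cml cmh.
  case/orP: hm => /eqP hm; first by rewrite -hm hl1 eqxx orbT.
  by move: (cut_neq hk); rewrite hm cmh' eqxx.
- have [lh1 cml'] := Vs_meet hl lk cmh cml.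
  case/orP: hm => /eqP hm; last by rewrite lh1 hm eqxx.
  by move: (cut_neq hk); rewrite -lh1 -cml' hm eqxx.
Qed.

Lemma cut_in_V j : j <= k -> cut j \in V.
Proof. by case/cut_home => i ik /andP[/(mem_Vs_V ik)]. Qed.

Lemma cut_inj l m : l <= k -> m <= k -> cut l = cut m -> l = m.
Proof.
wlog lm : l m / l <= m => [hw lk mk clm|lk mk clm].
  by case: (leqP l m) => [|/ltnW] lm; [|apply/esym]; apply: hw.
move: lm; rewrite leq_eqVlt => /predU1P[// | lm].
have lk' : l < k by apply: leq_trans lm mk.
have := cutl_Vs lk'; rewrite clm cut_Vs // (ltn_eqF lm) /= => /eqP ml.
by move: (cut_neq lk'); rewrite clm ml eqxx.
Qed.

Lemma Vs_common i j x y : i < k -> j < k -> i != j ->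
  x \in Vs i -> y \in Vs i -> x \in Vs j -> y \in Vs j -> x = y.
Proof.
move=> ik jk ij xi yi xj yj; case: (ltngtP i j) => [l|l|eij]; last by rewrite eij eqxx in ij.
  by case: (Vs_meet l jk xi xj) => _ ->; case: (Vs_meet l jk yi yj) => _ ->.
by case: (Vs_meet l ik xj xi) => _ ->; case: (Vs_meet l ik yj yi) => _ ->.
Qed.

Lemma Es_mem i x y : i < k ->
  ([set x; y] \in Es i) = [&& x \in Vs i, y \in Vs i & [set x; y] \in E].
Proof.
move=> ik; apply/idP/idP => [xyi|/and3P[xi yi /mem_E[j jk xyj]]].
  by have /andP[-> ->] := edges_on_mem (Es_on ik) xyi; rewrite (subsetP (Es_sub_E ik)).
have [->//|ij] := eqVneq i j; have /andP[xj yj] := edges_on_mem (Es_on jk) xyj.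
by move: (edges_on_neq (Es_on jk) xyj); rewrite (Vs_common ik jk ij xi yi xj yj) eqxx.
Qed.

Lemma Es_sub_avoid i v : i < k -> v \notin Vs i -> Es i \subset avoid E v.
Proof. by move=> ik; apply: sub_avoid (Es_sub_E ik) (Es_on ik). Qed.

Lemma connect_Vs F i x : i < k -> Es i \subset F -> x \in Vs i -> connect (adj F) (cut i) x.
Proof.
move=> ik sF xi; case: (two_terminal_cut ik) => _ _ _ conn _.
exact: connect_adj_sub sF _ _ (conn x xi).
Qed.

Lemma connect_cuts F a b : a <= b <= k -> (forall m, a <= m < b -> Es m \subset F) ->
  connect (adj F) (cut a) (cut b).
Proof.
case/andP=> ab bk sF; apply: connect_chain ab _ => m /andP[am mb].
have mk : m < k by apply: leq_trans mb bk.
by apply: connect_Vs mk _ (cutr_Vs mk); apply: sF; rewrite am.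
Qed.

Lemma t_notin_Vs m : m.+1 < k -> t \notin Vs m.
Proof. by move=> mk; rewrite -cutk cut_Vs ?(ltn_trans _ mk) //; lia. Qed.

Lemma s_neq_t : s != t.
Proof.
rewrite -cut0 -cutk; apply/eqP => /(cut_inj (leq0n k) (leqnn k)) k0.
by move: k_gt1; rewrite -k0.
Qed.

Lemma serial_connect x : x \in V -> connect (adj E) s x.
Proof.
case/mem_V => i ik xi; rewrite -cut0; apply: (@connect_trans _ _ (cut i)).
  apply: connect_cuts => [|m /andP[_ mi]]; first by rewrite /= ltnW.
  exact: Es_sub_E (ltn_trans mi ik).
exact: connect_Vs (Es_sub_E ik) xi.
Qed.

Lemma serial_connect_avoid_t x : x \in V -> x != t -> connect (adj (avoid E t)) s x.
Proof.
case/mem_V => i ik xi xt; rewrite -cut0; apply: (@connect_trans _ _ (cut i)).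
  apply: connect_cuts => [|m /andP[_ mi]]; first by rewrite /= ltnW.
  exact: Es_sub_avoid (ltn_trans mi ik) (t_notin_Vs (leq_ltn_trans mi ik)).
have [ik1|ik1] := eqVneq i.+1 k.
  case: (two_terminal_cut ik) => _ _ _ _ /(_ x xi); rewrite ik1 cutk => /(_ xt).
  exact: connect_adj_sub (avoidS _ (Es_sub_E ik)) _ _.
have ik2 : i.+1 < k by rewrite ltn_neqAle ik1.
exact: connect_Vs ik (Es_sub_avoid ik (t_notin_Vs ik2)) xi.
Qed.

Lemma serial_two_terminal : two_terminal V E s t.
Proof.
split; [exact: s_neq_t | | | exact: serial_connect | exact: serial_connect_avoid_t].
  by rewrite -cut0 -cutk; apply/subsetP => x /set2P[]->; apply: cut_in_V.
move=> e /mem_E[i ik /(Es_on ik)[x [y [xy xi yi ->]]]].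
by exists x, y; split=> //; apply: mem_Vs_V ik _.
Qed.

Hypothesis Gi_nonserial : forall i, i < k ->
  {in Vs i, forall x, x != ss i -> x != ts i -> connect (adj (avoid (Es i) x)) (ss i) (ts i)}.

Local Notation before := (before E s).
Local Notation separates := (separates E s t).

Lemma before_cut_Vs j x : j <= k -> x \in before (cut j) -> exists2 l, l < j & x \in Vs l.
Proof.
rewrite inE; case: j => [|j] jk /andP[xj sx].
  by rewrite cut0 connect_adj_sym in sx; move: xj; rewrite cut0 (connect_avoid_to sx) eqxx.
pose P := [pred y | [exists l : 'I_k, (l <= j) && (y \in Vs l)]].
suff /existsP[l /andP[lj xl]] : x \in P by exists l.
have clP : closed (adj (avoid E (cut j.+1))) P.
  refine (@intro_closed _ _ (connect_adj_sym _) P _) => u w.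
  rewrite adj_avoid !inE negb_or => /and3P[/mem_E[l' l'k ul'] ujN _] /existsP[l /andP[lj ul]].
  have /andP[uVl' wVl'] := edges_on_mem (Es_on l'k) ul'.
  apply/existsP; exists (Ordinal l'k); rewrite /= wVl' andbT leqNgt; apply/negP => jl'.
  have [l'E uE] := Vs_meet (leq_ltn_trans lj jl') l'k ul uVl'.
  by move: ujN; rewrite uE (_ : l' = j.+1) ?eqxx //; lia.
rewrite -(closed_connect clP sx) -cut0 inE; apply/existsP.
by exists (Ordinal k_gt0); rewrite /= cutl_Vs // k_gt0.
Qed.

Lemma Vs_before_cut l j x : l < j -> j <= k -> x \in Vs l -> x != cut j -> x \in before (cut j).
Proof.
move=> lj jk xl xj; have lk := leq_trans lj jk.
rewrite inE xj -cut0; apply: (@connect_trans _ _ (cut l)).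
  apply: connect_cuts => [|m /andP[_ ml]]; first by rewrite /= ltnW.
  by apply: Es_sub_avoid (ltn_trans ml lk) _; rewrite cut_Vs ?(ltn_trans ml lk) //; lia.
have [lj1|lj1] := eqVneq l.+1 j.
  case: (two_terminal_cut lk) => _ _ _ _ /(_ x xl); rewrite lj1 => /(_ xj).
  exact: connect_adj_sub (avoidS _ (Es_sub_E lk)) _ _.
by apply: connect_Vs lk (Es_sub_avoid lk _) xl; rewrite cut_Vs //; lia.
Qed.

Lemma cut_before_cut l j : l <= k -> j <= k -> (cut l \in before (cut j)) = (l < j).
Proof.
move=> lk jk; apply/idP/idP => [lbj|lj]; last first.
  have ljN : cut l != cut j by apply: contraTneq lj => /(cut_inj lk jk)->; rewrite ltnn.
  exact: Vs_before_cut lj jk (cutl_Vs (leq_trans lj jk)) ljN.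
have lNj : l != j by apply: contraTneq lbj => ->; rewrite inE eqxx.
have [m mj] := before_cut_Vs jk lbj; rewrite cut_Vs ?(leq_trans mj jk) // => mlE.
lia.
Qed.

Lemma separates_cut j : j <= k -> separates (cut j).
Proof.
move=> jk; apply/negP => sjt; have [jk'|kj] := ltnP j k.
  suff : cut k \in before (cut j) by rewrite cut_before_cut // ltnNge ltnW.
  rewrite inE cutk sjt andbT -cutk.
  by apply: contraTneq jk' => /(cut_inj (leqnn k) jk)->; rewrite ltnn.
have jE : j = k by apply/eqP; rewrite eqn_leq jk kj.
by move: sjt s_neq_t; rewrite jE cutk => /connect_avoid_to->; rewrite eqxx.
Qed.

Lemma separates_cut_only v : v \in V -> separates v -> exists2 j, j <= k & v = cut j.
Proof.
case/mem_V => i ik vi sv.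
have [->|vNci] := eqVneq v (cut i); first by exists i => //; apply: ltnW.
have [->|vNci1] := eqVneq v (cut i.+1); first by exists i.+1.
case/negP: sv; rewrite -cut0 -cutk; apply: connect_chain => // m /andP[_ mk].
have [mi|im|->] := ltngtP m i.
- apply: (connect_Vs mk (Es_sub_avoid mk _) (cutr_Vs mk)).
  by apply: contra vNci => vm; have [_ ->] := Vs_meet mi ik vm vi.
- apply: (connect_Vs mk (Es_sub_avoid mk _) (cutr_Vs mk)).
  by apply: contra vNci1 => vm; have [-> ->] := Vs_meet im mk vi vm.
have := Gi_nonserial ik vi; rewrite ss_cut // ts_cut // => /(_ vNci vNci1).
exact: connect_adj_sub (avoidS _ (Es_sub_E ik)) _ _.
Qed.

Lemma sep_rank_cut j : j <= k -> sep_rank V E s t (cut j) = j.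
Proof.
move=> jk; have inj : injective (fun l : 'I_j => cut l).
  by move=> l1 l2 /cut_inj e; apply/val_inj/e; rewrite ltnW // (leq_trans _ jk).
rewrite /sep_rank -[RHS]card_ord -(card_imset _ inj); apply: eq_card => c.
rewrite inE; apply/and3P/imsetP => [[cV sc cb]|[l _ ->]].
  have [m mk cm] := separates_cut_only cV sc; move: cb; rewrite cm cut_before_cut // => mj.
  by exists (Ordinal mj).
have lk : l <= k by rewrite ltnW // (leq_trans _ jk).
by rewrite cut_in_V // separates_cut // cut_before_cut.
Qed.

Lemma aut_fix_cut g j : g \in Aut_or V E s t -> j <= k -> g (cut j) = cut j.
Proof.
move=> gA jk; have [m mk gj] : exists2 m, m <= k & g (cut j) = cut m.
  apply: separates_cut_only; first by rewrite (aut_mem gA) cut_in_V.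
  by rewrite (aut_separates _ gA) separates_cut.
by rewrite gj (_ : m = j) // -(sep_rank_cut mk) -gj (aut_sep_rank _ gA) sep_rank_cut.
Qed.

Lemma Vs_char i x : i < k ->
  (x \in Vs i) = (x \notin before (cut i)) && ((x == cut i.+1) || (x \in before (cut i.+1))).
Proof.
move=> ik; apply/idP/idP => [xi|/andP[xNb /predU1P[->|xb1]]]; last 2 first.
- exact: cutr_Vs.
- have [l li xl] := before_cut_Vs ik xb1; move: li; rewrite ltnS leq_eqVlt => /predU1P[<-//|li].
  have [->|xNc] := eqVneq x (cut i); first exact: cutl_Vs.
  by rewrite (Vs_before_cut li (ltnW ik) xl xNc) in xNb.
apply/andP; split.
  apply/negP => xb; have [l li xl] := before_cut_Vs (ltnW ik) xb.
  by have [_ xE] := Vs_meet li ik xl xi; move: xb; rewrite inE xE eqxx.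
have [//|xNc1] := eqVneq x (cut i.+1).
exact: Vs_before_cut (ltnSn i) ik xi xNc1.
Qed.

Lemma aut_Vs g i : g \in Aut_or V E s t -> i < k -> {mono g : x / x \in Vs i}.
Proof.
move=> gA ik x; rewrite !Vs_char // -{1}(aut_fix_cut gA (ltnW ik)) -{1 2}(aut_fix_cut gA ik).
by rewrite (inj_eq perm_inj) !(aut_before _ _ gA).
Qed.

Lemma restr_aut_Vs g i x : g \in Aut_or V E s t -> i < k -> x \in Vs i ->
  restr_perm (Vs i) g x = g x.
Proof.
move=> gA ik; apply: restr_permE; apply/astabsP => y.
by rewrite /= apermE (aut_Vs gA ik).
Qed.

Lemma restr_aut g i : g \in Aut_or V E s t -> i < k ->
  restr_perm (Vs i) g \in Aut_or (Vs i) (Es i) (cut i) (cut i.+1).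
Proof.
move=> gA ik; have r_on := restr_perm_on (Vs i) g.
have rE := restr_aut_Vs gA ik; rewrite inE; apply/and5P; split.
- by apply/forallP => x; apply/implyP => xNi; rewrite (out_perm r_on).
- by apply/forallP => x; rewrite (perm_closed _ r_on) implybb.
- apply/forallP => x; apply/forallP => y; rewrite !Es_mem // !(perm_closed _ r_on).
  have [xi|] //= := boolP (x \in Vs i); have [yi|] //= := boolP (y \in Vs i).
  by rewrite !rE // (aut_edge gA).
- by rewrite rE ?cutl_Vs // aut_fix_cut // ltnW.
by rewrite rE ?cutr_Vs // aut_fix_cut.
Qed.

Lemma restr_aut_act g i F : g \in Aut_or V E s t -> i < k -> F \subset Es i ->
  act_edges (restr_perm (Vs i) g) F = act_edges g F.
Proof.
move=> gA ik sF; apply: eq_in_imset => f fF; apply: eq_in_imset => x xf.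
by rewrite restr_aut_Vs // (subsetP (edges_on_subset (Es_on ik) (subsetP sF f fF))).
Qed.

Section Gluing.
Variable U : nat -> {set {set T}}.
Hypothesis U_ST : forall i, i < k -> U i \in ST (Vs i) (Es i).

Definition glue := \bigcup_(i < k) U i.

Lemma U_sub i : i < k -> U i \subset Es i.
Proof. by move/U_ST; rewrite inE => /and3P[]. Qed.

Lemma connect_glue i x : i < k -> x \in Vs i -> connect (adj glue) (cut i) x.
Proof.
move=> ik xi; move: (U_ST ik); rewrite inE => /and3P[_ /connectedbP cU _].
exact: connect_adj_sub (bigcup_sup (Ordinal ik) isT) _ _ (cU _ _ (cutl_Vs ik) xi).
Qed.

Lemma glue_connected : connectedb V glue.
Proof.
apply: (@connectedb_from _ _ _ s) => x /mem_V[i ik xi]; rewrite -cut0.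
apply: (@connect_trans _ _ (cut i)); last exact: connect_glue.
apply: connect_chain => // m /andP[_ mi]; have mk := ltn_trans mi ik.
exact: connect_glue mk (cutr_Vs mk).
Qed.

Lemma glue_acyclic : ~~ has_cycle glue.
Proof.
suff acyc m : m <= k -> ~~ has_cycle (\bigcup_(i < m) U i) by apply: acyc.
elim: m => [|m IHm] mk; first by rewrite big_ord0 has_cycle0.
rewrite big_ord_recr /=; apply: (@acyclic_setU _ (\bigcup_(i < m) Vs i) (Vs m) _ _ (cut m)).
- by move=> x /bigcupP[[j jm] _ xj] xm; case: (Vs_meet jm mk xj xm).
- apply: edges_on_bigcup => -[j jm] _; have jk := ltn_trans jm mk.
  exact: edges_onS (U_sub jk) (Es_on jk).
- exact: edges_onS (U_sub mk) (Es_on mk).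
- exact: IHm (ltnW mk).
by move: (U_ST mk); rewrite inE => /and3P[].
Qed.

Lemma glue_ST : glue \in ST V E.
Proof.
rewrite inE glue_connected glue_acyclic !andbT /glue.
by apply/bigcupsP => -[i ik] _; apply: subset_trans (U_sub ik) (Es_sub_E ik).
Qed.

Lemma aut_glue_cap g i : g \in Aut_or V E s t -> i < k ->
  act_edges g glue :&: Es i = act_edges g (U i).
Proof.
move=> gA ik; apply/setP => e; rewrite inE; apply/andP/imsetP => [[]|[f fU ->]].
  case/imsetP=> f /bigcupP[[j jk] _ fj] -> gfi; exists f => //.
  have [<-//|ji] := eqVneq j i.
  have [x [y [xy xj yj fE]]] := Es_on jk (subsetP (U_sub jk) f fj).
  move: gfi; rewrite fE imset_set2 Es_mem // !(aut_Vs gA ik) => /and3P[xi yi _].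
  by move: xy; rewrite (Vs_common jk ik ji xj yj xi yi) eqxx.
have [x [y [_ xi yi fE]]] := Es_on ik (subsetP (U_sub ik) f fU).
split; first by apply: imset_f; apply/bigcupP; exists (Ordinal ik).
rewrite fE imset_set2 Es_mem // !(aut_Vs gA ik) xi yi (aut_edge gA) /=.
by rewrite -fE (subsetP (Es_sub_E ik)) // (subsetP (U_sub ik)).
Qed.

Lemma glue_cap i : i < k -> glue :&: Es i = U i.
Proof. by move=> ik; have := aut_glue_cap (group1 _) ik; rewrite !act_edgesE !act1. Qed.

End Gluing.

Lemma orbit_glue_inj i U U' : i < k ->
  (forall j, j < k -> U j \in ST (Vs j) (Es j)) ->
  (forall j, j < k -> U' j \in ST (Vs j) (Es j)) ->
  orbit_of (Aut_or V E s t) (glue U) = orbit_of (Aut_or V E s t) (glue U') ->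
  orbit_of (Aut_or (Vs i) (Es i) (cut i) (cut i.+1)) (U i) =
  orbit_of (Aut_or (Vs i) (Es i) (cut i) (cut i.+1)) (U' i).
Proof.
move=> ik U_ST U'_ST; rewrite !orbit_ofE => /esym/orbit_eqP/orbitP[g gA gU].
have -> : U' i = edge_action (U i) (restr_perm (Vs i) g).
  rewrite -act_edgesE (restr_aut_act gA ik (U_sub U_ST ik)).
  by rewrite -(aut_glue_cap U_ST gA ik) act_edgesE gU glue_cap.
by rewrite orbit_act // restr_aut.
Qed.

Lemma ST_Vs_exists j : j < k -> exists F, F \in ST (Vs j) (Es j).
Proof. by move=> jk; apply/ST_exists/two_terminal_connected/Gi. Qed.

Lemma n_orbits_Vs_le i : i < k -> n_orbits (Vs i) (Es i) (ss i) (ts i) <= n_orbits V E s t.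
Proof.
move=> ik; rewrite /n_orbits ss_cut // ts_cut //.
pose U0 j := odflt set0 [pick F in ST (Vs j) (Es j)].
have U0_ST j : j < k -> U0 j \in ST (Vs j) (Es j).
  by rewrite /U0; case: pickP => [F //|noST] /ST_Vs_exists[F]; rewrite noST.
pose U F j := if j == i then F else U0 j.
have U_ST F : F \in ST (Vs i) (Es i) -> forall j, j < k -> U F j \in ST (Vs j) (Es j).
  by move=> FST j jk; rewrite /U; case: eqP => [->|_] //; apply: U0_ST.
apply: (@leq_trans #|[set orbit_of (Aut_or V E s t) (glue (U F)) | F in ST (Vs i) (Es i)]|).
  apply: leq_card_imset_factor => F F' FST F'ST.
  by move/(orbit_glue_inj ik (U_ST F FST) (U_ST F' F'ST)); rewrite /U eqxx.
apply/subset_leq_card/subsetP => _ /imsetP[F FST ->].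
by apply: imset_f; apply: glue_ST; apply: U_ST.
Qed.

Lemma sum_card_Vs : \sum_(i < k) #|Vs i| <= 2 * #|V|.
Proof.
have two i : i < k -> #|Vs i| <= 2 * (#|Vs i|).-1.
  move=> ik; have : [set cut i; cut i.+1] \subset Vs i.
    by apply/subsetP => x /set2P[]->; rewrite ?cutl_Vs ?cutr_Vs.
  by move/subset_leq_card; rewrite cards2 cut_neq //; lia.
apply: (@leq_trans (\sum_(i < k) 2 * (#|Vs i|).-1)); first by apply: leq_sum => i _; apply: two.
rewrite -big_distrr leq_mul2l /=; have -> : V = \bigcup_(i < k) Vs i by case: shape => _ [].
apply: sum_card_bigcup => i ik; rewrite -(cards1 (cut i)); apply/subset_leq_card/subsetP => x.
by rewrite !inE => /andP[/bigcupP[[j ji] _ xj] xi]; case: (Vs_meet ji ik xj xi) => _ ->.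
Qed.

End Serial.

Lemma edge_two_terminal (T : finType) (s t : T) :
  s != t -> two_terminal [set s; t] [set [set s; t]] s t.
Proof.
move=> st; split=> //.
- by move=> e /set1P->; exists s, t; rewrite set21 set22.
- by move=> x /set2P[]->; rewrite ?connect0 // connect1 // /adj set11.
by move=> x /set2P[]->; rewrite ?connect0 ?eqxx.
Qed.

Lemma parallel_two_terminal (T : finType) (V : {set T}) E s t k Vs Es :
  parallel_shape V E s t k Vs Es -> (forall i, i < k -> two_terminal (Vs i) (Es i) s t) ->
  two_terminal V E s t.
Proof.
case=> k2 _ VE EE Gi; have k0 : 0 < k := ltn_trans (ltn0Sn 0) k2.
have subV i : i < k -> Vs i \subset V by move=> ik; rewrite VE (bigcup_sup (Ordinal ik)).
have subE i : i < k -> Es i \subset E by move=> ik; rewrite EE (bigcup_sup (Ordinal ik)).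
have [st sV _ _ _] := Gi 0 k0; split=> //.
- exact: subset_trans sV (subV 0 k0).
- by rewrite EE VE; apply: edges_on_bigcup => -[i ik] _; case: (Gi i ik).
- move=> x; rewrite VE => /bigcupP[[i ik] _ xi]; case: (Gi i ik) => _ _ _ reach _.
  exact: connect_adj_sub (subE i ik) _ _ (reach x xi).
move=> x; rewrite VE => /bigcupP[[i ik] _ xi] xt; case: (Gi i ik) => _ _ _ _ reach.
exact: connect_adj_sub (avoidS _ (subE i ik)) _ _ (reach x xi xt).
Qed.

Lemma osp_two_terminal (T : finType) (V : {set T}) E s t : osp V E s t -> two_terminal V E s t.
Proof.
elim=> {V E s t} [s t | V E s t k Vs Es ss ts shape _ | V E s t k Vs Es shape _].
- exact: edge_two_terminal.
- exact: serial_two_terminal.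
exact: parallel_two_terminal.
Qed.

(* In a parallel superedge, a principal subgraph not containing [x] connects the terminals. *)
Lemma osp_nonserial_connect (T : finType) (V : {set T}) E a b :
  osp V E a b -> ~ is_serial V E a b ->
  {in V, forall x, x != a -> x != b -> connect (adj (avoid E x)) a b}.
Proof.
case=> {V E a b} [s t _ | V E s t k Vs Es ss ts shape comps nser | V E s t k Vs Es shape comps _].
- by move=> _ x /set2P[]->; rewrite eqxx.
- by case: nser; exists k, Vs, Es, ss, ts.
case: shape => k2 meet VE EE; move=> x; rewrite VE => /bigcupP[[i ik] _ xi] xs xt.
pose j := if i == 0 then 1 else 0.
have jk : j < k by rewrite /j; case: (i == 0) => //; apply: ltn_trans k2.
have ij : i != j by rewrite /j; case: (i =P 0) => [->|/eqP].
have xNj : x \notin Vs j.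
  apply/negP => xj; have : x \in Vs i :&: Vs j by rewrite inE xi xj.
  by rewrite meet // !inE (negbTE xs) (negbTE xt).
case: (osp_two_terminal (comps j jk)) => _ /subsetP stj onj reach _.
apply: connect_adj_sub (sub_avoid (_ : Es j \subset E) onj xNj) _ _ (reach t (stj t (set22 s t))).
by rewrite EE (bigcup_sup (Ordinal jk)).
Qed.

Theorem lemma5p13 :
  exists C : nat, 0 < C /\
  forall (T : finType) (V : {set T}) (E : {set {set T}}) (s t : T)
    (k : nat) (Vs : nat -> {set T}) (Es : nat -> {set {set T}}) (ss ts : nat -> T),
    serial_shape V E s t k Vs Es ss ts ->
    (forall i, i < k -> osp (Vs i) (Es i) (ss i) (ts i)) ->
    (forall i, i < k -> ~ is_serial (Vs i) (Es i) (ss i) (ts i)) ->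
    \sum_(i < k) #|Vs i| * n_orbits (Vs i) (Es i) (ss i) (ts i)
      <= C * #|V| * n_orbits V E s t.
Proof.
exists 2; split=> // T V E s t k Vs Es ss ts shape Gosp Gnser.
have Gi i (ik : i < k) := osp_two_terminal (Gosp i ik).
have Gi_nonserial i (ik : i < k) := osp_nonserial_connect (Gosp i ik) (Gnser i ik).
apply: (@leq_trans (\sum_(i < k) #|Vs i| * n_orbits V E s t)).
  apply: leq_sum => i _; rewrite leq_mul2l orbC.
  by rewrite (n_orbits_Vs_le shape Gi Gi_nonserial (ltn_ord i)).
by rewrite -big_distrl /= leq_mul2r (sum_card_Vs shape Gi) orbT.
Qed.
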